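(* Let $F\leq F'\leq\hat F$ be permutation groups on $\Omega$. The closure of $G(F,F')$ in the topological group $\mathrm{Aut}(\mathcal{T}_d)$ (permutation topology) is $U(F')$. In particular, $G(F)$ is dense in $\mathrm{Aut}(\mathcal{T}_d)$ if and only if $F$ is transitive on $\Omega$.
   Context: Standing notation. $\Omega$ is a finite set with $d=|\Omega|\geq 3$, $\mathcal{T}_d$ is the $d$-regular tree with vertex set $V$ and set $E$ of non-oriented edges, and $\mathrm{Aut}(\mathcal{T}_d)$ carries the permutation topology (basis of identity neighbourhoods: pointwise stabilizers of finite vertex sets). Fix a coloring $c:E\to\Omega$ such that for every vertex $v$ its restriction $c_v$ to the set $E(v)$ of edges containing $v$ is a bijection onto $\Omega$. For $g\in\mathrm{Aut}(\mathcal{T}_d)$ and $v\in V$, the local permutation is $\sigma(g,v)=c_{gv}\circ g_v\circ c_v^{-1}\in\mathrm{Sym}(\Omega)$, where $g_v:E(v)\to E(gv)$ is induced by $g$. For $F\leq\mathrm{Sym}(\Omega)$: $U(F)=\{g:\sigma(g,v)\in F \ \forall v\}$; $G(F)=\{g:\sigma(g,v)\in F \text{ for all but finitely many } v\}$; $\hat F$ is the subgroup of permutations preserving each $F$-orbit. For $F\leq F'\leq\hat F$, $G(F,F')=G(F)\cap U(F')$. *)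

From HB Require Import structures.
From mathcomp Require Import all_boot all_order all_fingroup.
Set Implicit Arguments. Unset Strict Implicit. Unset Printing Implicit Defensive.

(** * The d-regular tree with a legal coloring, d = #|Omega|.
    Canonical model: vertices are the reduced words over Omega (no two
    consecutive letters equal).  The neighbour of w in colour a is w with its
    last letter removed if that letter is a, and w.a otherwise; the edge
    {w, nbr w a} has colour a.  This is a d-regular tree whose coloring c
    restricts to a bijection E(v) -> Omega at each vertex v. *)

Section Tree.
Variable Omega : finType.

Definition reduced (s : seq Omega) : bool := sorted (fun a b => a != b) s.

Definition vertex := {s : seq Omega | reduced s}.

Definition nbr_seq (s : seq Omega) (a : Omega) : seq Omega :=
  if s is x :: s' then
    (if last x s' == a then belast x s' else rcons s a)
  else [:: a].

Lemma nbr_seq_reduced (v : vertex) (a : Omega) : reduced (nbr_seq (val v) a).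
Proof.
case: v => [[|x s] /= Hs]; first by [].
case: eqP => Hl.
- have H2 : sorted (fun a b : Omega => a != b) (rcons (belast x s) (last x s))
    by rewrite -lastI.
  move: H2; rewrite /reduced.
  case: (belast x s) => [|y t] //=.
  by rewrite rcons_path => /andP [].
- by rewrite /reduced /= rcons_path Hs /=; apply/eqP.
Qed.

Definition nbr (v : vertex) (a : Omega) : vertex :=
  exist _ (nbr_seq (val v) a) (nbr_seq_reduced v a).

Definition adj (u w : vertex) : Prop := exists a, w = nbr u a.

Definition is_aut (g : vertex -> vertex) : Prop :=
  bijective g /\ forall u w, adj u w <-> adj (g u) (g w).

(** [local_in g v F] : the local permutation sigma(g,v) = c_{gv} o g_v o c_v^{-1}
    belongs to F, i.e. g maps the edge of colour a at v to the edge of colour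
    p a at g v, for some p in F. *)
Definition local_in (g : vertex -> vertex) (v : vertex) (F : {set {perm Omega}}) : Prop :=
  exists2 p : {perm Omega}, p \in F & forall a, g (nbr v a) = nbr (g v) (p a).

Definition U_ (F : {set {perm Omega}}) (g : vertex -> vertex) : Prop :=
  is_aut g /\ forall v, local_in g v F.

Definition G_ (F : {set {perm Omega}}) (g : vertex -> vertex) : Prop :=
  is_aut g /\ exists X : seq vertex, forall v, v \notin X -> local_in g v F.

Definition G2_ (F F' : {set {perm Omega}}) (g : vertex -> vertex) : Prop :=
  G_ F g /\ U_ F' g.

Definition Fhat (F : {set {perm Omega}}) : {set {perm Omega}} :=
  [set p : {perm Omega} | [forall a, p a \in orbit 'P F a]].

(** closure in Aut(T_d) for the permutation topology: g is an automorphism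
    and every basic neighbourhood g.Stab(X) (X finite) meets S, i.e. some
    h in S agrees with g on X. *)
Definition aut_closure (S : (vertex -> vertex) -> Prop) (g : vertex -> vertex) : Prop :=
  is_aut g /\ forall X : seq vertex, exists2 h, S h & forall x, x \in X -> h x = g x.

Definition aut_dense (S : (vertex -> vertex) -> Prop) : Prop :=
  forall g, is_aut g -> aut_closure S g.

End Tree.

From HB Require Import structures.
From mathcomp Require Import all_boot all_order all_fingroup.
Set Implicit Arguments. Unset Strict Implicit. Unset Printing Implicit Defensive.

(* Vertices are reduced words, so a map of the tree is determined by the image of the
   root and its local permutations, and every family of local permutations that agrees
   along edges (both endpoints act in the same way on the colour of the edge) is realised
   by an automorphism.  An element of U(F') is approximated on a ball of radius R by
   keeping its local permutations inside the ball and continuing outside with elements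
   of F that agree with them on the colour of the edge pointing back to the root; these
   exist since F' <= \hat F.  U(F') is closed since it is defined by local conditions.
   Conversely, if a local permutation of g in G(F) moved a colour out of its F-orbit,
   the compatibility along edges would propagate the defect along arbitrarily long
   non-backtracking walks, all inside the finite exceptional set; so G(F) <= U(\hat F),
   and density of G(F) forces every transposition into \hat F, i.e. F is transitive. *)

Section Tree.
Variable Omega : finType.
Notation V := (vertex Omega).
Implicit Types (u v w : V) (a b : Omega) (s z : seq Omega).

Definition root : V := exist _ [::] isT.

Lemma reduced_rcons s a : reduced (rcons s a) -> reduced s.
Proof. by case: s => //= x t; rewrite rcons_path => /andP[]. Qed.

Lemma reduced_rcons2 s a b :
  reduced (rcons s a) -> b != a -> reduced (rcons (rcons s a) b).
Proof.
case: s => [|x s] /=; first by rewrite andbT eq_sym.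
by rewrite !rcons_path last_rcons => -> /=; rewrite eq_sym.
Qed.

Lemma nbr_seq_rcons s a : reduced (rcons s a) -> nbr_seq s a = rcons s a.
Proof. by case: s => [|x s] //=; rewrite rcons_path => /andP[_ /negbTE ->]. Qed.

Lemma nbr_seq_rconsK s a : nbr_seq (rcons s a) a = s.
Proof. by case: s => [|x s] /=; rewrite ?last_rcons ?belast_rcons eqxx. Qed.

Lemma nbr_rcons v w a : val w = rcons (val v) a -> w = nbr v a.
Proof.
move=> Ew; apply: val_inj; change (val w = nbr_seq (val v) a).
by rewrite nbr_seq_rcons -Ew //; exact: valP.
Qed.

Lemma nbr_cases w a :
  val (nbr w a) = rcons (val w) a \/ val w = rcons (val (nbr w a)) a.
Proof.
case: w => [[|x s] Hs] /=; first by left.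
by case: eqP => [<-|_]; [right; rewrite -lastI | left].
Qed.

Lemma nbrK w a : nbr (nbr w a) a = w.
Proof.
apply: val_inj; change (nbr_seq (val (nbr w a)) a = val w).
case: (nbr_cases w a) => [->|E]; first exact: nbr_seq_rconsK.
by rewrite nbr_seq_rcons -E //; exact: valP.
Qed.

Lemma nbr_inj w : injective (nbr w).
Proof.
move=> a b /(congr1 val) E.
have no_loop n : n != n.+2 by elim: n.
case: (nbr_cases w a) => Ha; case: (nbr_cases w b) => Hb.
- by move: E; rewrite Ha Hb => /rcons_inj [].
- move/(congr1 size): Ha; rewrite E Hb !size_rcons => /eqP.
  by rewrite (negbTE (no_loop _)).
- move/(congr1 size): Hb; rewrite -E Ha !size_rcons => /eqP.
  by rewrite (negbTE (no_loop _)).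
- by move: Ha; rewrite Hb E => /rcons_inj [].
Qed.

Definition walk v z : V := foldl (@nbr Omega) v z.

Lemma walk_rcons v z a : walk v (rcons z a) = nbr (walk v z) a.
Proof. exact: foldl_rcons. Qed.

Lemma walk_cat v z1 z2 : walk v (z1 ++ z2) = walk (walk v z1) z2.
Proof. exact: foldl_cat. Qed.

Lemma val_walk_root s : reduced s -> val (walk root s) = s.
Proof.
elim/last_ind: s => [|s a IH] //= Hs.
by rewrite walk_rcons /= IH ?nbr_seq_rcons //; exact: reduced_rcons Hs.
Qed.

Lemma walk_root w : walk root (val w) = w.
Proof. by apply: val_inj; rewrite val_walk_root //; exact: valP. Qed.

Lemma walk_rev v z : walk (walk v z) (rev z) = v.
Proof. by elim: z v => [|a z IH] v //=; rewrite rev_cons walk_rcons IH nbrK. Qed.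

(* Left multiplication by [u] in the free product of copies of Z/2 indexed by [Omega]. *)
Definition translate u w : V := walk u (val w).

Lemma translate_nbr u w a : translate u (nbr w a) = nbr (translate u w) a.
Proof.
rewrite /translate; case: (nbr_cases w a) => ->; rewrite walk_rcons //.
by rewrite nbrK.
Qed.

Lemma walk_translate u w z : walk (translate u w) z = translate u (walk w z).
Proof. by elim: z w => [|a z IH] w //=; rewrite -IH translate_nbr. Qed.

Lemma translate_to_root w : translate (walk root (rev (val w))) w = root.
Proof. by rewrite /translate -{2}(revK (val w)) walk_rev. Qed.

Lemma walk_closed_nil v z : reduced z -> walk v z = v -> z = [::].
Proof.
move=> Rz Ez; have E : walk root z = root.
  by rewrite -{1}(translate_to_root v) walk_translate Ez translate_to_root.
by rewrite -(val_walk_root Rz) E.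
Qed.

Lemma walk_connected u w : exists2 z, reduced z & walk u z = w.
Proof.
set u' := walk root (rev (val u)).
exists (val (translate u' w)); first exact: valP.
have uu' : translate u u' = root.
  by rewrite -walk_translate /translate /= -{1}(walk_root u) walk_rev.
by rewrite -/(translate u _) -walk_translate uu' walk_root.
Qed.

Lemma walk_take_inj v z i j : reduced z -> i <= size z -> j <= size z ->
  walk v (take i z) = walk v (take j z) -> i = j.
Proof.
move=> Rz; wlog ij : i j / i <= j => [hwlog Hi Hj E|_ Hj E].
  by case/orP: (leq_total i j) => /hwlog; [apply | move=> ->].
have Ej : take j z = take i z ++ drop i (take j z).
  by rewrite -{1}(cat_take_drop i (take j z)) take_takel.
have Rd : reduced (drop i (take j z)) by apply/drop_sorted/take_sorted.
move: E; rewrite Ej walk_cat => /esym/(walk_closed_nil Rd)/(congr1 size).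
rewrite size_drop size_takel // => /eqP; rewrite subn_eq0 => ji.
by apply/eqP; rewrite eqn_leq ij.
Qed.

Fixpoint words n : seq (seq Omega) :=
  if n is n'.+1 then [::] :: [seq a :: s | a <- enum Omega, s <- words n']
  else [:: [::]].

Lemma mem_words n s : size s <= n -> s \in words n.
Proof.
elim: n s => [|n IH] [|a s] //= Hs; rewrite ?inE ?eqxx //.
by apply/orP; right; apply: allpairs_f; rewrite ?mem_enum ?IH.
Qed.

Definition ball n : seq V := pmap insub (words n).

Lemma mem_ball n v : size (val v) <= n -> v \in ball n.
Proof. by move=> Hv; rewrite mem_pmap_sub mem_words. Qed.

End Tree.
Arguments root {Omega}.
Arguments ball {Omega}.

Section LocalAction.
Variable Omega : finType.
Notation V := (vertex Omega).
Implicit Types (u v w : V) (a : Omega) (z : seq Omega).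

Variables (tau : V -> {perm Omega}) (h : V -> V).
Hypothesis h_nbr : forall w a, h (nbr w a) = nbr (h w) (tau w a).

Lemma local_action_compatible w a : tau (nbr w a) a = tau w a.
Proof. by apply: (@nbr_inj _ (h (nbr w a))); rewrite -h_nbr nbrK h_nbr nbrK. Qed.

Fixpoint word_img u z : seq Omega :=
  if z is a :: z' then tau u a :: word_img (nbr u a) z' else [::].

Lemma size_word_img u z : size (word_img u z) = size z.
Proof. by elim: z u => [|a z IH] u //=; rewrite IH. Qed.

Lemma local_action_walk u z : h (walk u z) = walk (h u) (word_img u z).
Proof. by elim: z u => [|a z IH] u //=; rewrite IH h_nbr. Qed.

Lemma word_img_reduced u z : reduced z -> reduced (word_img u z).
Proof.
case: z u => [|a z] //= u; elim: z u a => [|b z IH] u a //= /andP[ab pz].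
by rewrite IH // andbT -(local_action_compatible u a) (inj_eq perm_inj).
Qed.

Lemma local_action_inj : injective h.
Proof.
move=> x y; have [z Rz <-] := walk_connected x y.
rewrite local_action_walk => /esym/(walk_closed_nil (word_img_reduced x Rz)).
by move/(congr1 size); rewrite size_word_img => /size0nil ->.
Qed.

Lemma local_action_surj y : exists x, h x == y.
Proof.
have [z _ <-] := walk_connected (h root) y.
elim: z root => [|a z IH] x /=; first by exists x.
by rewrite -[a](permKV (tau x)) -h_nbr; exact: IH.
Qed.

Lemma local_action_aut : is_aut h.
Proof.
split.
  exists (fun y => xchoose (local_action_surj y)) => [x|y].
    by apply: local_action_inj; exact/eqP/(xchooseP (local_action_surj (h x))).
  exact/eqP/(xchooseP (local_action_surj y)).
move=> u w; split=> [[a ->]|[b E]]; first by exists (tau u a); rewrite h_nbr.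
by exists ((tau u)^-1 b)%g; apply: local_action_inj; rewrite E h_nbr permKV.
Qed.

End LocalAction.

Definition compatible (Omega : finType) (tau : vertex Omega -> {perm Omega}) :=
  forall w a, tau (nbr w a) a = tau w a.

Section TreeMap.
Variable Omega : finType.
Notation V := (vertex Omega).
Variable tau : V -> {perm Omega}.
Hypothesis tau_compat : compatible tau.

Definition tree_map (r w : V) : V := walk r (word_img tau root (val w)).

Lemma word_img_rcons u z a :
  word_img tau u (rcons z a) = rcons (word_img tau u z) (tau (walk u z) a).
Proof. by elim: z u => [|b z IH] u //=; rewrite IH. Qed.

Lemma tree_map_nbr r w a : tree_map r (nbr w a) = nbr (tree_map r w) (tau w a).
Proof.
rewrite /tree_map; case: (nbr_cases w a) => ->;
  rewrite word_img_rcons walk_rcons walk_root //.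
by rewrite tau_compat nbrK.
Qed.

End TreeMap.

Section LocalPerm.
Variable Omega : finType.
Notation V := (vertex Omega).
Variable g : V -> V.

Definition local_perm (v : V) : {perm Omega} :=
  odflt 1%g [pick p : {perm Omega} | [forall a, g (nbr v a) == nbr (g v) (p a)]].

Hypothesis g_aut : is_aut g.

Lemma local_permP v a : g (nbr v a) = nbr (g v) (local_perm v a).
Proof.
have [[gi gK _] g_adj] := g_aut.
pose f c := odflt c [pick b | g (nbr v c) == nbr (g v) b].
have fP c : g (nbr v c) = nbr (g v) (f c).
  rewrite /f; case: pickP => [b /eqP -> //|Hn].
  have [b Eb] : adj (g v) (g (nbr v c)) by apply: (g_adj v (nbr v c)).1; exists c.
  by move: (Hn b); rewrite Eb eqxx.
have f_inj : injective f.
  by move=> c d E; apply: (@nbr_inj _ v); apply: (can_inj gK); rewrite !fP E.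
rewrite /local_perm; case: pickP => [p /forallP /(_ a) /eqP //|Hn].
by move: (Hn (perm f_inj)) => /negbT /forallPn [b]; rewrite permE fP eqxx.
Qed.

Lemma local_inE v (S : {set {perm Omega}}) : local_in g v S <-> local_perm v \in S.
Proof.
split=> [[p Sp Ep]|Sv]; last by exists (local_perm v) => // a; exact: local_permP.
suff -> : local_perm v = p by [].
by apply/permP => a; apply: (@nbr_inj _ (g v)); rewrite -Ep local_permP.
Qed.

End LocalPerm.

Lemma orbit_escape (Omega : finType) (F : {group {perm Omega}}) (s : {perm Omega}) c :
  s c \notin orbit 'P F c -> exists2 c', c' != c & s c' \notin orbit 'P F c'.
Proof.
move=> sc_out; case: (pickP [pred c' | (c' != c) && (s c' \notin orbit 'P F c')]).
  by move=> c' /andP[]; exists c'.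
move=> in_orbit; set O := orbit 'P F c; exfalso.
(* [s] would map the complement of [O] onto itself, leaving no preimage for [s c]. *)
have sO : (s @: ~: O) \subset ~: O.
  apply/subsetP => y /imsetP[x]; rewrite !inE => xO ->.
  have xc : x != c by apply: contraNneq xO => ->; exact: orbit_refl.
  move: (in_orbit x); rewrite /= xc /= => /negbFE; rewrite orbit_sym => sx.
  by apply: contra xO => /(orbit_trans sx).
have sO_eq : (s @: ~: O) = ~: O.
  by apply/eqP; rewrite eqEcard sO card_imset ?leqnn //; exact: perm_inj.
have : s c \in (s @: ~: O) by rewrite sO_eq inE.
by case/imsetP => x; rewrite inE => xO /perm_inj xc; rewrite -xc orbit_refl in xO.
Qed.

Section OrbitBound.
Variables (Omega : finType) (F : {group {perm Omega}}).
Notation V := (vertex Omega).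
Variables (tau : V -> {perm Omega}) (Y : seq V).
Hypothesis tau_compat : compatible tau.
Hypothesis tau_F : forall v, v \notin Y -> tau v \in F.

Let off_orbit (w : V) a := tau w a \notin orbit 'P F a.

Lemma off_orbit_mem w a : off_orbit w a -> w \in Y.
Proof. by apply: contraR => /tau_F; exact: mem_orbit. Qed.

Lemma off_orbit_step w e : off_orbit w e -> exists2 e', e' != e & off_orbit (nbr w e) e'.
Proof. by rewrite /off_orbit -tau_compat => /orbit_escape. Qed.

Lemma off_orbit_walk v c n : off_orbit v c -> exists z, [/\ size z = n.+1, reduced z &
  forall i, i < size z -> off_orbit (walk v (take i z)) (nth c z i)].
Proof.
move=> vc; elim: n => [|n [z [+ Rz Oz]]]; first by exists [:: c]; split=> // [[|]].
case/lastP: z Rz Oz => [//|t e]; rewrite size_rcons => Rz Oz [Sz].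
have /off_orbit_step[e' e'e Oe'] : off_orbit (walk v t) e.
  by have := Oz _ (ltnSn (size t)); rewrite nth_rcons ltnn eqxx -cats1 take_size_cat.
exists (rcons (rcons t e) e'); split; first by rewrite !size_rcons Sz.
  exact: reduced_rcons2.
move=> i; rewrite size_rcons ltnS leq_eqVlt => /orP[/eqP ->|Hi].
  by rewrite nth_rcons ltnn eqxx -[rcons (rcons t e) e']cats1 take_size_cat // walk_rcons.
rewrite nth_rcons Hi -cats1 takel_cat ?(ltnW Hi) //.
by apply: Oz; rewrite -(size_rcons t e).
Qed.

Lemma compatible_orbit v c : tau v c \in orbit 'P F c.
Proof.
(* A walk of length [size Y + 1] off the orbit visits distinct vertices, all in [Y]. *)
apply: contraT => vc; have [z [Sz Rz Oz]] := off_orbit_walk (size Y) vc.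
pose f i := walk v (take i z).
have f_inj : {in iota 0 (size z) &, injective f}.
  move=> i j; rewrite !mem_iota !add0n => /ltnW Hi /ltnW Hj.
  exact: walk_take_inj.
have fY : {subset map f (iota 0 (size z)) <= Y}.
  move=> x /mapP[i]; rewrite mem_iota add0n => Hi ->.
  exact: off_orbit_mem (Oz i Hi).
have f_uniq : uniq (map f (iota 0 (size z))) by rewrite map_inj_in_uniq ?iota_uniq.
have := uniq_leq_size f_uniq fY.
by rewrite size_map size_iota Sz ltnn.
Qed.

End OrbitBound.

Section Truncation.
Variables (Omega : finType) (F : {group {perm Omega}}).
Notation V := (vertex Omega).
Variable tau : V -> {perm Omega}.
Hypothesis tau_compat : compatible tau.
Hypothesis tau_Fhat : forall v, tau v \in Fhat F.
Variable R : nat.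

Definition truncate (w : V) : V := exist _ (take R.+1 (val w)) (take_sorted _ (valP w)).

(* For a nonempty word, [last a (val u) == a] holds exactly for its last letter [a]. *)
Definition last_letter_approx (u : V) : {perm Omega} :=
  odflt 1%g [pick f in F | [forall a, (last a (val u) == a) ==> (f a == tau u a)]].

Lemma last_letter_approx_in u : last_letter_approx u \in F.
Proof.
by rewrite /last_letter_approx; case: pickP => [f /andP[]|_] //=; exact: group1.
Qed.

Lemma last_letter_approxE u t a :
  val u = rcons t a -> last_letter_approx u a = tau u a.
Proof.
move=> Eu; have := tau_Fhat u; rewrite inE => /forallP/(_ a)/orbitP[f fF fa].
rewrite /last_letter_approx; case: pickP => [f' /andP[_ /forallP/(_ a)]|none].
  by rewrite Eu last_rcons eqxx => /eqP.
move: (none f); rewrite fF /= => /negbT/forallPn[b].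
by rewrite Eu last_rcons negb_imply => /andP[/eqP <-]; rewrite -fa eqxx.
Qed.

(* [tau] inside the ball of radius [R]; outside it, an element of [F] determined by
   the first [R + 1] letters, which matches [tau] across the boundary edges. *)
Definition truncated_perm (w : V) : {perm Omega} :=
  if size (val w) <= R then tau w else last_letter_approx (truncate w).

Lemma truncated_perm_compatible : compatible truncated_perm.
Proof.
have edge p q a : val q = rcons (val p) a -> truncated_perm q a = truncated_perm p a.
  move=> Eq; have tau_pq : tau q a = tau p a by rewrite (nbr_rcons Eq) tau_compat.
  rewrite /truncated_perm Eq size_rcons.
  case: (ltngtP (size (val p)) R) => Hp //.
    suff -> : truncate q = truncate p by [].
    by apply: val_inj; rewrite /= Eq -cats1 takel_cat.
  have -> : truncate q = q.
    by apply: val_inj; rewrite /= take_oversize // Eq size_rcons Hp.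
  by rewrite (last_letter_approxE Eq).
by move=> w a; case: (nbr_cases w a) => /edge // <-.
Qed.

Lemma truncated_perm_ball w : size (val w) <= R -> truncated_perm w = tau w.
Proof. by rewrite /truncated_perm => ->. Qed.

Lemma truncated_perm_in w : R < size (val w) -> truncated_perm w \in F.
Proof. by rewrite /truncated_perm ltnNge => /negbTE ->; exact: last_letter_approx_in. Qed.

End Truncation.

Section Closure.
Variable Omega : finType.
Notation V := (vertex Omega).
Implicit Types (g h : V -> V).

Lemma local_actions_agree (tau1 tau2 : V -> {perm Omega}) h1 h2 R :
  (forall w a, h1 (nbr w a) = nbr (h1 w) (tau1 w a)) ->
  (forall w a, h2 (nbr w a) = nbr (h2 w) (tau2 w a)) ->
  h1 root = h2 root -> (forall w, size (val w) <= R -> tau1 w = tau2 w) ->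
  forall w, size (val w) <= R -> h1 w = h2 w.
Proof.
move=> h1_nbr h2_nbr E0 Etau [s Rs]; elim/last_ind: s Rs => [|s a IH] Rs /= Hs.
  by rewrite (_ : exist _ _ _ = root) //; exact: val_inj.
have Rs' := reduced_rcons Rs.
have Hs' : size s <= R by rewrite size_rcons in Hs; exact: ltnW.
have -> : exist _ (rcons s a) Rs = nbr (exist _ s Rs') a by exact: nbr_rcons.
by rewrite h1_nbr h2_nbr IH // Etau.
Qed.

Lemma U_closed (S : (V -> V) -> Prop) (F : {set {perm Omega}}) g :
  (forall h, S h -> U_ F h) -> aut_closure S g -> U_ F g.
Proof.
move=> SU [g_aut g_cl]; split=> // v.
have [h /SU[_ /(_ v)[p pF hp]] hg] := g_cl (v :: [seq nbr v a | a <- enum Omega]).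
exists p => // a; rewrite -hg ?inE ?map_f ?mem_enum ?orbT // hp hg ?mem_head //.
Qed.

Lemma aut_closure_sub (S S' : (V -> V) -> Prop) g :
  (forall h, S h -> S' h) -> aut_closure S g -> aut_closure S' g.
Proof.
by move=> SS' [g_aut g_cl]; split=> // X; have [h /SS' ? ?] := g_cl X; exists h.
Qed.

Lemma G_sub_U_Fhat (F : {group {perm Omega}}) g : G_ F g -> U_ (Fhat F) g.
Proof.
move=> [g_aut [Y gY]]; split=> // v; apply/(local_inE g_aut); rewrite inE.
apply/forallP => a; apply: (compatible_orbit (Y := Y)).
  exact: local_action_compatible (local_permP g_aut).
by move=> w /gY /(local_inE g_aut).
Qed.

Lemma U_sub_closure_G2 (F : {group {perm Omega}}) (F' : {set {perm Omega}}) g :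
  F \subset F' -> F' \subset Fhat F -> U_ F' g -> aut_closure (G2_ F F') g.
Proof.
move=> FF' F'Fhat [g_aut g_loc]; split=> // X.
have g_nbr := local_permP g_aut.
have tau_F' v : local_perm g v \in F' by apply/(local_inE g_aut).
pose R := \max_(x <- X) size (val x).
pose sigma := truncated_perm F (local_perm g) R.
have sigma_compat : compatible sigma.
  apply: truncated_perm_compatible; first exact: local_action_compatible g_nbr.
  by move=> v; apply: (subsetP F'Fhat).
have h_nbr := tree_map_nbr sigma_compat (g root).
have h_aut := local_action_aut h_nbr.
exists (tree_map sigma (g root)).
  split; split=> //.
    exists (ball R) => v vR; exists (sigma v) => //; apply: truncated_perm_in.
    by rewrite ltnNge; apply: contra vR; exact: mem_ball.
  move=> v; exists (sigma v) => //; rewrite /sigma /truncated_perm.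
  by case: ifP => _; [exact: tau_F' | apply: (subsetP FF'); exact: last_letter_approx_in].
move=> x Xx; apply: (local_actions_agree (R := R) h_nbr g_nbr) => //.
  exact: truncated_perm_ball.
exact: (leq_bigmax_seq _ Xx isT).
Qed.

End Closure.

Section Density.
Variables (Omega : finType) (F : {group {perm Omega}}).
Notation V := (vertex Omega).

Lemma sub_Fhat : F \subset Fhat F.
Proof. by apply/subsetP => p Fp; rewrite inE; apply/forallP => a; exact: mem_orbit. Qed.

Lemma Fhat_transitive : [transitive F, on [set: Omega] | 'P] -> forall p, p \in Fhat F.
Proof. by move=> Ftr p; rewrite inE; apply/forallP => a; rewrite (atransP Ftr) ?inE. Qed.

(* The tree map with constant local permutation [tperm a b] is in the closure of [G(F)]
   only if [b] lies in the [F]-orbit of [a]. *)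
Lemma dense_G_orbit : aut_dense (G_ F) -> forall a b, b \in orbit 'P F a.
Proof.
move=> Gdense a b; pose tau (_ : V) := tperm a b.
have g_nbr := tree_map_nbr (fun w c => erefl (tau w c)) root.
have g_aut := local_action_aut g_nbr.
have [_ /(_ root)[p pFhat gp]] := U_closed (@G_sub_U_Fhat _ F) (Gdense _ g_aut).
have pa : p a = b.
  by apply: (@nbr_inj _ (tree_map tau root root)); rewrite -gp g_nbr tpermL.
by move: pFhat; rewrite inE -pa => /forallP.
Qed.

Lemma dense_G_transitive :
  0 < #|Omega| -> aut_dense (G_ F) -> [transitive F, on [set: Omega] | 'P].
Proof.
move=> /card_gt0P[a0 _] /dense_G_orbit Forb.
have -> : [set: Omega] = orbit 'P F a0 by apply/setP => b; rewrite inE Forb.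
exact: atrans_orbit.
Qed.

End Density.

Theorem mainTheorem14 (Omega : finType) (hd : 3 <= #|Omega|)
    (F F' : {group {perm Omega}})
    (hFF' : F \subset F') (hF'hat : F' \subset Fhat F) :
  (forall g : vertex Omega -> vertex Omega,
      aut_closure (G2_ F F') g <-> U_ F' g)
  /\ (aut_dense (G_ F) <-> [transitive F, on [set: Omega] | 'P]).
Proof.
split=> [g|]; first split.
- by apply: U_closed => h [].
- exact: U_sub_closure_G2.
split; first exact/dense_G_transitive/(leq_trans _ hd).
move=> Ftr g g_aut; apply: (aut_closure_sub (S := G2_ F (Fhat F))) => [h []//|].
apply: U_sub_closure_G2; rewrite ?sub_Fhat //; split=> // v.
by apply/(local_inE g_aut); exact: Fhat_transitive.
Qed.
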